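(* Let $f,g\in\mathbb{H}$ be two linearly independent pure unit quaternions ($f^2=g^2=-1$, $f\neq\pm g$). Let $h\in L^1(\mathbb{R}^2,\mathbb{H})$, and let $h_{\pm}(\mathbf{x})=\frac12\big(h(\mathbf{x})\pm f\,h(\mathbf{x})\,g\big)$. Define $$\mathcal{F}^{g,f}_{c,\pm}\{h\}(\boldsymbol{\omega})=\int_{\mathbb{R}^2} e^{-g x_1\omega_1}\,\widetilde{h_{\pm}(\mathbf{x})}\,e^{-f x_2\omega_2}\,d^2\mathbf{x}.$$ Then $$\mathcal{F}^{g,f}_{c,\pm}\{h\}(\boldsymbol{\omega})=\int_{\mathbb{R}^2}\widetilde{h_{\pm}(\mathbf{x})}\,e^{-f(x_2\omega_2\mp x_1\omega_1)}\,d^2\mathbf{x}=\int_{\mathbb{R}^2}e^{-g(x_1\omega_1\mp x_2\omega_2)}\,\widetilde{h_{\pm}(\mathbf{x})}\,d^2\mathbf{x}.$$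
   Context: $\mathbb{H}$ is the real quaternion algebra, $i^2=j^2=k^2=ijk=-1$. For $q=q_r+q_ii+q_jj+q_kk$, the quaternion conjugate is $\tilde q=q_r-q_ii-q_jj-q_kk$. A pure unit quaternion $f$ satisfies $f^2=-1$, and $e^{\alpha f}=\cos\alpha+f\sin\alpha$. $d^2\mathbf{x}=dx_1dx_2$, $\mathbf{x},\boldsymbol{\omega}\in\mathbb{R}^2$. *)

From HB Require Import structures.
From mathcomp Require Import all_boot all_order all_algebra.
From mathcomp Require Import all_classical all_reals all_analysis.
Set Implicit Arguments. Unset Strict Implicit. Unset Printing Implicit Defensive.
Import Order.TTheory GRing.Theory Num.Theory.
Local Open Scope ring_scope.

(* q = qr + qi i + qj j + qk k *)
Record quat (R : Type) := Quat { qr : R; qi : R; qj : R; qk : R }.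

Section Quat.
Variable R : realType.

Definition qadd (p q : quat R) : quat R :=
  Quat (qr p + qr q) (qi p + qi q) (qj p + qj q) (qk p + qk q).
Definition qopp (p : quat R) : quat R := Quat (- qr p) (- qi p) (- qj p) (- qk p).
Definition qscale (a : R) (p : quat R) : quat R :=
  Quat (a * qr p) (a * qi p) (a * qj p) (a * qk p).
(* Hamilton product, i^2 = j^2 = k^2 = ijk = -1 *)
Definition qmul (p q : quat R) : quat R :=
  Quat (qr p * qr q - qi p * qi q - qj p * qj q - qk p * qk q)
       (qr p * qi q + qi p * qr q + qj p * qk q - qk p * qj q)
       (qr p * qj q - qi p * qk q + qj p * qr q + qk p * qi q)
       (qr p * qk q + qi p * qj q - qj p * qi q + qk p * qr q).
Definition qone : quat R := Quat 1 0 0 0.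
Definition qconj (p : quat R) : quat R := Quat (qr p) (- qi p) (- qj p) (- qk p).
Definition qreal (a : R) : quat R := Quat a 0 0 0.

Definition pure_unit (f : quat R) : Prop :=
  qr f = 0 /\ qmul f f = qopp qone.

Definition qexp (f : quat R) (a : R) : quat R :=
  qadd (qreal (cos a)) (qscale (sin a) f).

Definition leb2 := ((@lebesgue_measure R) \x (@lebesgue_measure R))%E.

Definition qintegrable (h : R * R -> quat R) : Prop :=
  [/\ leb2.-integrable setT (fun x => (qr (h x))%:E),
      leb2.-integrable setT (fun x => (qi (h x))%:E),
      leb2.-integrable setT (fun x => (qj (h x))%:E) &
      leb2.-integrable setT (fun x => (qk (h x))%:E)].

Definition qintegral (h : R * R -> quat R) : quat R :=
  Quat (Rintegral leb2 setT (fun x => qr (h x)))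
       (Rintegral leb2 setT (fun x => qi (h x)))
       (Rintegral leb2 setT (fun x => qj (h x)))
       (Rintegral leb2 setT (fun x => qk (h x))).

(* h_s(x) = 1/2 (h(x) + s f h(x) g), s = +1 or -1 *)
Definition hpm (f g : quat R) (s : R) (h : R * R -> quat R) (x : R * R) : quat R :=
  qscale (2^-1) (qadd (h x) (qscale s (qmul f (qmul (h x) g)))).

Definition Fc (f g : quat R) (s : R) (h : R * R -> quat R) (w : R * R) : quat R :=
  qintegral (fun x => qmul (qexp g (- (x.1 * w.1)))
                      (qmul (qconj (hpm f g s h x)) (qexp f (- (x.2 * w.2))))).
End Quat.

(** The identity holds pointwise in x.  Since f^2 = g^2 = -1 and s^2 = 1,
    the twisted part satisfies f h_s g = s h_s; conjugating, q = ~h_s satisfies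
    g q = -s q f.  Hence g and f can be traded across q in the exponentials,
    e^{t g} q = q e^{-s t f} and q e^{t f} = e^{-s t g} q, and the two
    exponentials on the same side then combine by e^{a f} e^{b f} = e^{(a+b) f}. *)
From mathcomp Require Import all_boot all_order all_algebra.
From mathcomp Require Import all_classical all_reals all_analysis.
From mathcomp Require Import ring.
Set Implicit Arguments. Unset Strict Implicit.
Import GRing.Theory Num.Theory.
Local Open Scope ring_scope.

Lemma quat_ext (R : Type) (a b c d a' b' c' d' : R) :
  a = a' -> b = b' -> c = c' -> d = d' -> Quat a b c d = Quat a' b' c' d'.
Proof. by move=> -> -> -> ->. Qed.

Ltac quat_ring :=
  repeat match goal with
    |- context [?q] => is_var q; lazymatch type of q with quat _ => destruct q end
  end;
  cbv beta iota delta [qmul qadd qscale qconj qreal qopp qone qexp qr qi qj qk];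
  apply: quat_ext; ring.

Section QuaternionAlgebra.
Variable R : realType.
Implicit Types (p q f g : quat R) (a b s t : R).

Lemma qmulA p q (r : quat R) : qmul p (qmul q r) = qmul (qmul p q) r.
Proof. quat_ring. Qed.

Lemma qmulZl a p q : qmul (qscale a p) q = qscale a (qmul p q).
Proof. quat_ring. Qed.

Lemma qmulZr a p q : qmul p (qscale a q) = qscale a (qmul p q).
Proof. quat_ring. Qed.

Lemma qmulDl p q (r : quat R) : qmul (qadd p q) r = qadd (qmul p r) (qmul q r).
Proof. quat_ring. Qed.

Lemma qmulDr p q (r : quat R) : qmul p (qadd q r) = qadd (qmul p q) (qmul p r).
Proof. quat_ring. Qed.

Lemma qscaleA a b p : qscale a (qscale b p) = qscale (a * b) p.
Proof. quat_ring. Qed.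

Lemma qconjZ a p : qconj (qscale a p) = qscale a (qconj p).
Proof. quat_ring. Qed.

Lemma qmulN1r p : qmul p (qopp (qone R)) = qscale (-1) p.
Proof. quat_ring. Qed.

Lemma qconj_sandwich_pure f g p : qr f = 0 -> qr g = 0 ->
  qconj (qmul f (qmul p g)) = qmul g (qmul (qconj p) f).
Proof. by case: f g => ? ? ? ? [? ? ? ?] /= -> ->; quat_ring. Qed.

Lemma qexp_mull g t q :
  qmul (qexp g t) q = qadd (qscale (cos t) q) (qscale (sin t) (qmul g q)).
Proof. quat_ring. Qed.

Lemma qexp_mulr f t q :
  qmul q (qexp f t) = qadd (qscale (cos t) q) (qscale (sin t) (qmul q f)).
Proof. quat_ring. Qed.

Lemma qexpD f a b : qmul f f = qopp (qone R) ->
  qmul (qexp f a) (qexp f b) = qexp f (a + b).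
Proof.
move=> ff.
have -> : qmul (qexp f a) (qexp f b) =
    qadd (qadd (qreal (cos a * cos b)) (qscale (sin a * sin b) (qmul f f)))
         (qscale (cos a * sin b + sin a * cos b) f) by quat_ring.
by rewrite ff /qexp cosD sinD; quat_ring.
Qed.

End QuaternionAlgebra.

Section Twisting.
Variable R : realType.
Variables f g : quat R.
Variable s : R.
Hypothesis pure_f : pure_unit f.
Hypothesis pure_g : pure_unit g.
Hypothesis sign_s : s = 1 \/ s = -1.

Lemma cos_sign t : cos (s * t) = cos t.
Proof. by case: sign_s => ->; rewrite ?mul1r ?mulN1r ?cosN. Qed.

Lemma sin_sign t : sin (s * t) = s * sin t.
Proof. by case: sign_s => ->; rewrite ?mul1r ?mulN1r ?sinN. Qed.

Lemma hpm_sandwich (h : R * R -> quat R) x :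
  qmul f (qmul (hpm f g s h x) g) = qscale s (hpm f g s h x).
Proof.
have [_ ff] := pure_f; have [_ gg] := pure_g.
rewrite /hpm; move: (h x) => p.
rewrite qmulZl qmulZr qmulDl qmulDr qmulZl qmulZr.
have -> : qmul f (qmul (qmul f (qmul p g)) g) = qmul (qmul f f) (qmul p (qmul g g)).
  by rewrite !qmulA.
rewrite ff gg.
by move: (qmul f (qmul p g)) => u; case: sign_s => ->; quat_ring.
Qed.

Lemma sandwich_conj_commute p : qmul f (qmul p g) = qscale s p ->
  qmul g (qconj p) = qscale (- s) (qmul (qconj p) f).
Proof.
have [f0 ff] := pure_f; have [g0 _] := pure_g.
move=> fpg; have gqf : qmul g (qmul (qconj p) f) = qscale s (qconj p).
  by rewrite -qconj_sandwich_pure // fpg qconjZ.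
have -> : qmul g (qconj p) = qscale (-1) (qmul (qmul g (qmul (qconj p) f)) f).
  by rewrite -!qmulA ff qmulN1r qmulZr qscaleA mulN1r opprK; quat_ring.
by rewrite gqf qmulZl qscaleA mulN1r.
Qed.

Variable q : quat R.
Hypothesis gq : qmul g q = qscale (- s) (qmul q f).

Lemma qexp_commute_l t : qmul (qexp g t) q = qmul q (qexp f (- (s * t))).
Proof.
by rewrite qexp_mull qexp_mulr gq cosN sinN cos_sign sin_sign qscaleA; congr qadd;
  congr qscale; ring.
Qed.

Lemma qexp_commute_r t : qmul q (qexp f t) = qmul (qexp g (- (s * t))) q.
Proof.
have qf : qmul q f = qscale (- s) (qmul g q).
  by rewrite gq qscaleA; move: (qmul q f) => r; case: sign_s => ->; quat_ring.
by rewrite qexp_mull qexp_mulr qf cosN sinN cos_sign sin_sign qscaleA; congr qadd;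
  congr qscale; ring.
Qed.

End Twisting.

Theorem theorem3 (R : realType) (f g : quat R) (h : R * R -> quat R) (s : R) :
  pure_unit f -> pure_unit g -> f <> g -> f <> qopp g ->
  qintegrable h -> (s = 1 \/ s = -1) ->
  forall w : R * R,
    Fc f g s h w =
      qintegral (fun x => qmul (qconj (hpm f g s h x))
                               (qexp f (- (x.2 * w.2 - s * (x.1 * w.1))))) /\
    Fc f g s h w =
      qintegral (fun x => qmul (qexp g (- (x.1 * w.1 - s * (x.2 * w.2))))
                               (qconj (hpm f g s h x))).
Proof.
move=> pf pg _ _ _ hs w; rewrite /Fc.
have [_ ff] := pf; have [_ gg] := pg.
have gq x := sandwich_conj_commute pf pg (hpm_sandwich pf pg hs h x).
split; congr qintegral; apply: funext => x.
- rewrite qmulA (qexp_commute_l hs (gq x)) -qmulA qexpD //.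
  by congr (qmul _ (qexp _ _)); ring.
- rewrite (qexp_commute_r hs (gq x)) qmulA qexpD //.
  by congr (qmul (qexp _ _) _); ring.
Qed.
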